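(* Let $f\in\mathbb{R}[x]$ be squarefree of degree $n$, $f=f_n(x-\xi_1)\cdots(x-\xi_n)$ with pairwise distinct $\xi_i\in\mathbb{C}$, where $\xi_1,\dots,\xi_k$ are the real roots ($0\le k\le n$) and the non-real roots are labeled so that $\xi_{k+2i-1}=\overline{\xi_{k+2i}}$ for $1\le i\le \frac{n-k}{2}$. Let $u_1,\dots,u_n\in\mathbb{C}[x]$ be the Lagrange basis $u_i=\prod_{j\neq i}\frac{x-\xi_j}{\xi_i-\xi_j}$. Let $g\in\mathbb{R}[x]$ satisfy $g(\xi_i)>0$ for $1\le i\le k$. Fix real numbers $\lambda_i>|g(\xi_{k+2i})|$ for $1\le i\le\frac{n-k}{2}$ and set $$h=\sum_{i=1}^n g(\xi_i)\,u_i^2+2\sum_{i=1}^{(n-k)/2}\lambda_i\,u_{k+2i-1}u_{k+2i}.$$ Then $h\in\mathbb{R}[x]$, $h\equiv g\pmod f$, and $h=\sum_{i=1}^n\omega_i h_i^2$, where: - $h_i=u_i$ and $\omega_i=g(\xi_i)$ for $1\le i\le k$; - for $1\le i\le\frac{n-k}{2}$, writing $\gamma_i=g(\xi_{k+2i})$, $$h_{k+2i-1}=\Re(u_{k+2i})-\frac{\Im(\gamma_i)}{\lambda_i+\Re(\gamma_i)}\Im(u_{k+2i}),\qquad h_{k+2i}=\frac{\sqrt{\lambda_i^2-|\gamma_i|^2}}{\lambda_i+\Re(\gamma_i)}\Im(u_{k+2i}),$$ and $\omega_{k+2i-1}=\omega_{k+2i}=2(\lambda_i+\Re(\gamma_i))$.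 Moreover all $\omega_i>0$, and $h_1,\dots,h_n$ are linearly independent polynomials in $\mathbb{R}[x]$ of degree $<n$.
   Context: For a polynomial $u\in\mathbb{C}[x]$, $\Re(u)$ and $\Im(u)$ denote the real polynomials obtained by taking real and imaginary parts of the coefficients, so $u=\Re(u)+\mathbf{i}\,\Im(u)$. *)

From HB Require Import structures.
From mathcomp Require Import all_boot all_order all_algebra.
From mathcomp Require Import reals.
From mathcomp.real_closed Require Export complex.
Set Implicit Arguments. Unset Strict Implicit. Unset Printing Implicit Defensive.
Import Order.TTheory GRing.Theory Num.Theory.
Local Open Scope ring_scope.

Section Defs.
Variable R : realType.
Local Notation C := R[i].

Definition polyRC (p : {poly R}) : {poly C} := map_poly (real_complex R) p.

Definition polyRe (u : {poly C}) : {poly R} := map_poly (@complex.Re R) u.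
Definition polyIm (u : {poly C}) : {poly R} := map_poly (@complex.Im R) u.

Definition cabs (z : C) : R := ComplexField.Normc.normc z.

(* Lagrange basis (0-based indices): u_i = prod_{j<n, j<>i} (x - xi_j)/(xi_i - xi_j) *)
Definition lagr_basis (n : nat) (xi : nat -> C) (i : nat) : {poly C} :=
  \prod_(j < n | (j : nat) != i) (('X - (xi j)%:P) * ((xi i - xi j)^-1)%:P).

Definition hpoly (n k : nat) (xi : nat -> C) (g : {poly R}) (lam : nat -> R)
  : {poly C} :=
  \sum_(i < n) (polyRC g).[xi i] *: (lagr_basis n xi i) ^+ 2
  + 2%:R * \sum_(i < (n - k)./2)
       real_complex R (lam i) *: (lagr_basis n xi (k + 2 * i) * lagr_basis n xi (k + 2 * i).+1).

(* gamma_i = g(xi_{k+2i+1}) (0-based; paper: g(xi_{k+2i}) 1-based) *)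
Definition gam (k : nat) (xi : nat -> C) (g : {poly R}) (i : nat) : C :=
  (polyRC g).[xi (k + 2 * i).+1].

Definition hcomp (n k : nat) (xi : nat -> C) (g : {poly R}) (lam : nat -> R)
  (j : nat) : {poly R} :=
  if (j < k)%N then polyRe (lagr_basis n xi j)
  else
    let i := (j - k)./2 in
    let ga := gam k xi g i in
    let v := lagr_basis n xi (k + 2 * i).+1 in
    if ~~ odd (j - k) then
      polyRe v - (complex.Im ga / (lam i + complex.Re ga)) *: polyIm v
    else
      (Num.sqrt (lam i ^+ 2 - cabs ga ^+ 2) / (lam i + complex.Re ga)) *: polyIm v.

Definition wcoef (n k : nat) (xi : nat -> C) (g : {poly R}) (lam : nat -> R)
  (j : nat) : R :=
  if (j < k)%N then complex.Re (polyRC g).[xi j]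
  else 2%:R * (lam ((j - k)./2) + complex.Re (gam k xi g ((j - k)./2))).

End Defs.

From HB Require Import structures.
From mathcomp Require Import all_boot all_order all_algebra.
From mathcomp Require Import reals.
From mathcomp.real_closed Require Import complex.
From mathcomp Require Import ring lra zify.
Set Implicit Arguments.
Unset Strict Implicit.
Unset Printing Implicit Defensive.

Import Order.TTheory GRing.Theory Num.Theory.
Local Open Scope ring_scope.

(* Since u_i(xi_j) = delta_ij, h takes the value g(xi_j) at every root of f, so
   f divides h - g.  Complex conjugation permutes the roots, hence the Lagrange
   basis: u_i is real for a real root xi_i, and the two members of a conjugate
   pair of roots have conjugate Lagrange polynomials w = conj v.  Writing
   v = A + iB with A, B real and gamma = g(xi) = p + iq at the root of v, the
   pair contributes
     conj(gamma) w^2 + gamma v^2 + 2 lambda w v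
       = 2(lambda + p) A^2 - 4 q A B + 2(lambda - p) B^2,
   a real binary quadratic form which is positive definite because
   lambda > |gamma|; completing the square yields the stated h_j and omega_j.
   Finally, evaluating a real relation sum_j c_j h_j = 0 at the root of v gives
   one complex equation whose real and imaginary parts force the two
   coefficients of the pair to vanish. *)

Lemma sum_conj_pair_sqr (T : comNzRingType) (I A B L P Q : T) : I * I = -1 ->
  (P - I * Q) * (A - I * B) ^+ 2 + (P + I * Q) * (A + I * B) ^+ 2
    + 2 * (L * ((A - I * B) * (A + I * B)))
  = 2 * (L + P) * A ^+ 2 - 4 * Q * (A * B) + 2 * (L - P) * B ^+ 2.
Proof.
move=> I2; transitivity (2 * (L + P) * A ^+ 2 + 2 * (P - L) * (I * I) * B ^+ 2
                          + 4 * Q * (I * I) * (A * B)); first ring.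
by rewrite I2; ring.
Qed.

Lemma complete_square (F : fieldType) (L P Q s : F) (A B : {poly F}) :
  L + P != 0 -> s ^+ 2 = L ^+ 2 - P ^+ 2 - Q ^+ 2 ->
  (2 * (L + P)) *: (A - (Q / (L + P)) *: B) ^+ 2
    + (2 * (L + P)) *: ((s / (L + P)) *: B) ^+ 2
  = (2 * (L + P)) *: A ^+ 2 - (4 * Q) *: (A * B) + (2 * (L - P)) *: B ^+ 2.
Proof.
move=> nzLP s2; rewrite -!mul_polyC.
set a := L + P; set t := Q / a; set s' := s / a.
transitivity ((2 * a)%:P * A ^+ 2 - (2 * (2 * a * t))%:P * (A * B)
              + (2 * a * (t ^+ 2 + s' ^+ 2))%:P * B ^+ 2); first ring.
congr (_ - _%:P * _ + _%:P * _); first by rewrite /t; field.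
by rewrite /t /s' !expr_div_n s2 /a; field.
Qed.

Lemma half_mul2n h : ((2 * h)./2 = h)%N.
Proof. by rewrite mul2n doubleK. Qed.

Lemma uphalf_mul2n h : (uphalf (2 * h) = h)%N.
Proof. by rewrite mul2n uphalf_double. Qed.

Lemma sum_ord_pairs (V : nmodType) (N k M : nat) (F : nat -> V) :
    N = (k + M.*2)%N ->
  \sum_(j < N) F j
  = \sum_(j < k) F j + \sum_(h < M) (F (k + 2 * h)%N + F (k + 2 * h).+1).
Proof.
move=> ->; rewrite big_split_ord /=; congr (_ + _).
elim: M => [|M IH]; first by rewrite !big_ord0.
rewrite doubleS !big_ord_recr /= IH -addrA; congr (_ + (F _ + F _)); lia.
Qed.

HB.instance Definition _ (R : realType) :=
  GRing.RMorphism.copy (@polyRC R) (map_poly (real_complex R)).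

Section RealImaginaryParts.
Variable R : realType.
Local Notation C := R[i].
Implicit Types (p : {poly R}) (v : {poly C}).

Lemma coef_polyRC p j : (polyRC p)`_j = real_complex R p`_j.
Proof. exact: coef_map. Qed.

Lemma polyRCC (c : R) : polyRC c%:P = (real_complex R c)%:P.
Proof. exact: map_polyC. Qed.

Lemma polyRCZ (c : R) p : polyRC (c *: p) = real_complex R c *: polyRC p.
Proof. exact: map_polyZ. Qed.

Lemma conj_polyRC p : map_poly conjc (polyRC p) = polyRC p.
Proof. by apply/polyP => j; rewrite coef_map /= coef_polyRC conjc_real. Qed.

Lemma horner_polyRC_conj p (z : C) : (polyRC p).[conjc z] = conjc (polyRC p).[z].
Proof. by rewrite -{1}conj_polyRC horner_map. Qed.

Lemma polyReIm v : v = polyRC (polyRe v) + ('i%C)%:P * polyRC (polyIm v).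
Proof.
apply/polyP => j; rewrite coefD coefCM !coef_polyRC !coef_map_id0 //.
exact: complexE.
Qed.

Lemma conj_polyReIm v :
  map_poly conjc v = polyRC (polyRe v) - ('i%C)%:P * polyRC (polyIm v).
Proof.
apply/polyP => j; rewrite coefB coefCM !coef_polyRC coef_map_id0 ?conjc0 // !coef_map_id0 //.
by case: (v`_j) => a b /=; simpc.
Qed.

Lemma mulcii : 'i%C * 'i%C = -1 :> C.
Proof. by rewrite -expr2 sqr_i. Qed.

Lemma horner_polyRC_polyRe v (z : C) :
  (polyRC (polyRe v)).[z] = 2^-1 * (v.[z] + (map_poly conjc v).[z]).
Proof.
rewrite {2}[v]polyReIm conj_polyReIm !(hornerD, hornerN, hornerCM).
by field.
Qed.

Lemma horner_polyRC_polyIm v (z : C) :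
  (polyRC (polyIm v)).[z] = 2^-1 * 'i%C * ((map_poly conjc v).[z] - v.[z]).
Proof.
rewrite {3}[v]polyReIm conj_polyReIm !(hornerD, hornerN, hornerCM).
set b := (polyRC _).[z].
transitivity (- ('i%C * 'i%C) * b); first by rewrite mulcii opprK mul1r.
by field.
Qed.

Lemma polyRe_conj_fixed v : map_poly conjc v = v -> polyRC (polyRe v) = v.
Proof.
move=> /polyP vE; apply/polyP => j; rewrite coef_polyRC coef_map_id0 //.
move: (vE j); rewrite coef_map_id0 ?conjc0 //; case: (v`_j) => a b /= [] b0.
by congr Complex; lra.
Qed.

Lemma size_polyRe v : (size (polyRe v) <= size v)%N.
Proof. exact: size_poly. Qed.

Lemma size_polyIm v : (size (polyIm v) <= size v)%N.
Proof. exact: size_poly. Qed.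

Lemma cabs_ge0 (z : C) : 0 <= cabs z.
Proof. by case: z => a b; rewrite /cabs /= sqrtr_ge0. Qed.

Lemma sqr_cabs (z : C) : cabs z ^+ 2 = complex.Re z ^+ 2 + complex.Im z ^+ 2.
Proof. by case: z => a b; rewrite /cabs /= sqr_sqrtr // addr_ge0 ?sqr_ge0. Qed.

End RealImaginaryParts.

Section Lagrange.
Variable R : realType.
Local Notation C := R[i].
Variables (n : nat) (xi : nat -> C).
Hypothesis xi_inj : forall i j : nat, (i < n)%N -> (j < n)%N -> xi i = xi j -> i = j.
Local Notation u := (lagr_basis n xi).

Lemma lagr_basis_node i j : (i < n)%N -> (j < n)%N -> (u i).[xi j] = (i == j)%:R.
Proof.
move=> ltin ltjn; rewrite /lagr_basis horner_prod.
have [<-|neij] := eqVneq i j.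
  apply: big1 => l neli; rewrite hornerM hornerXsubC hornerC mulfV // subr_eq0.
  by apply: contra neli => /eqP/(xi_inj ltin (ltn_ord l)) ->.
rewrite (bigD1 (Ordinal ltjn)) 1?eq_sym //=.
by rewrite hornerM hornerXsubC subrr !mul0r.
Qed.

Lemma size_lagr_basis i : (i < n)%N -> (size (u i) <= n)%N.
Proof.
move=> ltin; apply: leq_trans (size_poly_prod_leq _ _) _.
have size_factor (j : 'I_n) :
    (size (('X - (xi j)%:P) * ((xi i - xi j)^-1)%:P)%R <= 2)%N.
  apply: leq_trans (size_polyMleq _ _) _.
  by rewrite size_XsubC; case: size (size_polyC_leq1 (xi i - xi j)^-1) => [|[]].
set P := (X in #|X|).
have cardP : (#|P| < n)%N.
  rewrite -[n in (_ < n)%N]card_ord -(cardC P) -[X in (X < _)%N]addn0 ltn_add2l.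
  by apply/card_gt0P; exists (Ordinal ltin); rewrite !inE /= negbK.
apply: leq_trans (leq_sub2r _ (_ : _ <= (#|P| * 2).+1)%N) _; last by move: #|P| cardP => c; lia.
by rewrite ltnS -sum_nat_const; apply: leq_sum.
Qed.

Lemma uniq_nodes : uniq (mkseq xi n).
Proof. by apply/mkseq_uniqP => a b; rewrite !inE; apply: xi_inj. Qed.

Lemma all_root_nodes (p : {poly C}) :
  (forall j, (j < n)%N -> p.[xi j] = 0) -> all (root p) (mkseq xi n).
Proof.
move=> p_xi; apply/allP => x /mapP[j]; rewrite mem_iota => /andP[_ ltjn] ->.
by apply/rootP/p_xi.
Qed.

Lemma eq0_of_nodes (p : {poly C}) :
  (size p <= n)%N -> (forall j, (j < n)%N -> p.[xi j] = 0) -> p = 0.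
Proof.
move=> size_p p_xi; apply/eqP; apply: contraTT size_p => nz_p.
rewrite -ltnNge -{1}(size_mkseq xi n).
exact: max_poly_roots nz_p (all_root_nodes p_xi) uniq_nodes.
Qed.

Lemma prod_nodes_dvdp (p : {poly C}) :
  (forall j, (j < n)%N -> p.[xi j] = 0) -> \prod_(j < n) ('X - (xi j)%:P) %| p.
Proof.
move=> p_xi.
have -> : \prod_(j < n) ('X - (xi j)%:P) = \prod_(z <- mkseq xi n) ('X - z%:P).
  by rewrite big_map -(big_mkord xpredT (fun j => 'X - (xi j)%:P)) /index_iota subn0.
by rewrite uniq_roots_dvdp ?all_root_nodes ?uniq_rootsE ?uniq_nodes.
Qed.

Lemma lagr_basis_conj (s : nat -> nat) i :
    (forall j, (j < n)%N -> (s j < n)%N) -> (forall j, (j < n)%N -> s (s j) = j) ->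
    (forall j, (j < n)%N -> conjc (xi j) = xi (s j)) -> (i < n)%N ->
  map_poly conjc (u i) = u (s i).
Proof.
move=> s_lt sK conj_xi ltin; apply/eqP; rewrite -subr_eq0; apply/eqP.
apply: eq0_of_nodes => [|j ltjn].
  rewrite (leq_trans (size_polyD _ _)) // size_polyN size_map_inj_poly ?conjc0 //.
    by rewrite geq_max !size_lagr_basis ?s_lt.
  exact: can_inj (@conjcK R).
have -> : xi j = conjc (xi (s j)) by rewrite conj_xi ?s_lt ?sK.
rewrite hornerD hornerN horner_map conj_xi ?s_lt // sK // !lagr_basis_node ?s_lt //.
suff -> : (i == s j) = (s i == j) by rewrite rmorph_nat subrr.
by apply/eqP/eqP => [->|<-]; rewrite sK.
Qed.

End Lagrange.

Section SumOfSquares.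
Variable R : realType.
Local Notation C := R[i].
Variables (n k : nat) (f g : {poly R}) (xi : nat -> C) (lam : nat -> R).
Hypothesis le_kn : (k <= n)%N.
Hypothesis even_nk : ~~ odd (n - k).
Hypothesis xi_inj : forall i j : nat, (i < n)%N -> (j < n)%N -> xi i = xi j -> i = j.
Hypothesis xi_real : forall i : nat, (i < k)%N -> complex.Im (xi i) = 0.
Hypothesis xi_pair : forall i : nat, (i < (n - k)./2)%N ->
  xi (k + 2 * i)%N = conjc (xi (k + 2 * i).+1).
Hypothesis g_pos : forall i : nat, (i < k)%N -> 0 < (polyRC g).[xi i].
Hypothesis lam_gt_cabs : forall i : nat, (i < (n - k)./2)%N -> cabs (gam k xi g i) < lam i.

Local Notation m := ((n - k)./2).
Local Notation u := (lagr_basis n xi).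
Local Notation v h := (u (k + 2 * h).+1).
Local Notation hc := (hcomp n k xi g lam).
Local Notation wc := (wcoef n k xi g lam).
Local Notation ga := (gam k xi g).
Local Notation tcoef h := (complex.Im (ga h) / (lam h + complex.Re (ga h))).
Local Notation scoef h :=
  (Num.sqrt (lam h ^+ 2 - cabs (ga h) ^+ 2) / (lam h + complex.Re (ga h))).

Lemma n_eq : n = (k + m.*2)%N.
Proof. by rewrite even_halfK ?subnKC. Qed.

Lemma pair_index_lt h : (h < m)%N -> ((k + 2 * h).+1 < n)%N.
Proof. by move=> lthm; rewrite [n]n_eq; lia. Qed.

Lemma index_cases j : (j < n)%N ->
  [\/ (j < k)%N, exists2 h, (h < m)%N & j = (k + 2 * h)%N
               | exists2 h, (h < m)%N & j = (k + 2 * h).+1].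
Proof.
move=> ltjn; have [ltjk|lekj] := ltnP j k; first exact: Or31.
have := odd_double_half (j - k); have := n_eq.
case: odd => /= ? ?; [apply: Or33 | apply: Or32]; exists (j - k)./2; lia.
Qed.

Definition conj_index (j : nat) : nat :=
  if (j < k)%N then j else if odd (j - k) then j.-1 else j.+1.

Lemma conj_index_real j : (j < k)%N -> conj_index j = j.
Proof. by rewrite /conj_index => ->. Qed.

Lemma conj_index_fst h : conj_index (k + 2 * h) = (k + 2 * h).+1.
Proof. by rewrite /conj_index ltnNge leq_addr addKn oddM. Qed.

Lemma conj_index_snd h : conj_index (k + 2 * h).+1 = (k + 2 * h)%N.
Proof.
by rewrite /conj_index ltnNge -addnS leq_addr addKn /= oddM andFb addnS.
Qed.

Lemma conj_index_lt j : (j < n)%N -> (conj_index j < n)%N.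
Proof.
move=> ltjn; case: (index_cases ltjn) => [ltjk|[h lthm ->]|[h lthm ->]].
- by rewrite conj_index_real.
- by rewrite conj_index_fst pair_index_lt.
- by rewrite conj_index_snd ltnW ?pair_index_lt.
Qed.

Lemma conj_indexK j : (j < n)%N -> conj_index (conj_index j) = j.
Proof.
move=> ltjn; case: (index_cases ltjn) => [ltjk|[h _ ->]|[h _ ->]].
- by rewrite !conj_index_real.
- by rewrite conj_index_fst conj_index_snd.
- by rewrite conj_index_snd conj_index_fst.
Qed.

Lemma conj_xi j : (j < n)%N -> conjc (xi j) = xi (conj_index j).
Proof.
move=> ltjn; case: (index_cases ltjn) => [ltjk|[h lthm ->]|[h lthm ->]].
- by rewrite conj_index_real //; case: (xi j) (xi_real ltjk) => a b /= ->; rewrite oppr0.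
- by rewrite conj_index_fst xi_pair // conjcK.
- by rewrite conj_index_snd xi_pair.
Qed.

Lemma conj_lagr_basis j : (j < n)%N -> map_poly conjc (u j) = u (conj_index j).
Proof. exact/lagr_basis_conj/conj_xi/conj_indexK/conj_index_lt. Qed.

Lemma lagr_basis_real j : (j < k)%N -> polyRC (polyRe (u j)) = u j.
Proof.
move=> ltjk; apply: polyRe_conj_fixed.
by rewrite conj_lagr_basis ?conj_index_real ?(leq_trans ltjk).
Qed.

Lemma lagr_basis_pair h : (h < m)%N -> u (k + 2 * h)%N = map_poly conjc (v h).
Proof. by move=> lthm; rewrite conj_lagr_basis ?conj_index_snd ?pair_index_lt. Qed.

Lemma hcomp_real j : (j < k)%N -> hc j = polyRe (u j).
Proof. by rewrite /hcomp => ->. Qed.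

Lemma hcomp_pair_fst h : hc (k + 2 * h)%N = polyRe (v h) - tcoef h *: polyIm (v h).
Proof. by rewrite /hcomp ltnNge leq_addr addKn oddM /= half_mul2n. Qed.

Lemma hcomp_pair_snd h : hc (k + 2 * h).+1 = scoef h *: polyIm (v h).
Proof.
by rewrite /hcomp ltnNge -addnS leq_addr addKn /= oddM /= uphalf_mul2n addnS.
Qed.

Lemma wcoef_real j : (j < k)%N -> wc j = complex.Re (polyRC g).[xi j].
Proof. by rewrite /wcoef => ->. Qed.

Lemma wcoef_pair_fst h : wc (k + 2 * h)%N = 2 * (lam h + complex.Re (ga h)).
Proof. by rewrite /wcoef ltnNge leq_addr addKn half_mul2n. Qed.

Lemma wcoef_pair_snd h : wc (k + 2 * h).+1 = 2 * (lam h + complex.Re (ga h)).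
Proof. by rewrite /wcoef ltnNge -addnS leq_addr addKn /= uphalf_mul2n. Qed.

Lemma wcoef_real_g j : (j < k)%N -> real_complex R (wc j) = (polyRC g).[xi j].
Proof.
move=> ltjk; rewrite wcoef_real //.
move: (ger0_Im (ltW (g_pos ltjk))).
by case: (polyRC g).[xi j] => a b /= ->.
Qed.

Lemma hcomp_real_lagr j : (j < k)%N -> polyRC (hc j) = u j.
Proof. by move=> ltjk; rewrite hcomp_real ?lagr_basis_real. Qed.

Lemma sqr_disc h : (h < m)%N ->
  Num.sqrt (lam h ^+ 2 - cabs (ga h) ^+ 2) ^+ 2
  = lam h ^+ 2 - complex.Re (ga h) ^+ 2 - complex.Im (ga h) ^+ 2.
Proof.
move=> lthm; rewrite sqr_sqrtr; first by rewrite sqr_cabs opprD addrA.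
by have := lam_gt_cabs lthm; have := cabs_ge0 (ga h); move: (cabs _) => c; nra.
Qed.

Lemma disc_gt0 h : (h < m)%N -> 0 < Num.sqrt (lam h ^+ 2 - cabs (ga h) ^+ 2).
Proof.
move=> lthm; have := lam_gt_cabs lthm; have := cabs_ge0 (ga h).
by rewrite sqrtr_gt0 subr_gt0; move: (cabs _) => c; nra.
Qed.

Lemma lam_Re_gt0 h : (h < m)%N -> 0 < lam h + complex.Re (ga h).
Proof.
move=> lthm; have := lam_gt_cabs lthm; have := sqr_cabs (ga h); have := cabs_ge0 (ga h).
move: (cabs _) (complex.Re _) (complex.Im _) => c p q; nra.
Qed.

Lemma wcoef_gt0 j : (j < n)%N -> 0 < wc j.
Proof.
move=> ltjn; case: (index_cases ltjn) => [ltjk|[h lthm ->]|[h lthm ->]].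
- by rewrite wcoef_real //; have := g_pos ltjk; rewrite ltcE => /andP[].
- by rewrite wcoef_pair_fst mulr_gt0 ?lam_Re_gt0.
- by rewrite wcoef_pair_snd mulr_gt0 ?lam_Re_gt0.
Qed.

Lemma g_pair_conj h : (h < m)%N -> (polyRC g).[xi (k + 2 * h)%N] = conjc (ga h).
Proof. by move=> lthm; rewrite xi_pair // horner_polyRC_conj. Qed.

Lemma pair_sum h : (h < m)%N ->
  polyRC (wc (k + 2 * h)%N *: hc (k + 2 * h)%N ^+ 2
          + wc (k + 2 * h).+1 *: hc (k + 2 * h).+1 ^+ 2)
  = (polyRC g).[xi (k + 2 * h)%N] *: u (k + 2 * h)%N ^+ 2
    + (polyRC g).[xi (k + 2 * h).+1] *: v h ^+ 2
    + 2 * (real_complex R (lam h) *: (u (k + 2 * h)%N * v h)).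
Proof.
move=> lthm; rewrite hcomp_pair_fst hcomp_pair_snd wcoef_pair_fst wcoef_pair_snd.
rewrite complete_square ?sqr_disc ?lt0r_neq0 ?lam_Re_gt0 //.
rewrite g_pair_conj // lagr_basis_pair //.
move: (conj_polyReIm (v h)) (polyReIm (v h)).
set A := polyRe (v h); set B := polyIm (v h) => -> vE; rewrite [in RHS]vE.
rewrite -[(polyRC g).[_]]/(ga h).
set p := complex.Re (ga h); set q := complex.Im (ga h).
have gaE : ga h = real_complex R p + 'i%C * real_complex R q := complexE _.
have gaconjE : conjc (ga h) = real_complex R p - 'i%C * real_complex R q.
  by rewrite /p /q; case: (ga h) => x y /=; simpc.
rewrite gaconjE gaE -!mul_polyC.
pose I := ('i%C)%:P : {poly C}.
pose L := polyRC (lam h)%:P; pose P := polyRC p%:P; pose Q := polyRC q%:P.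
transitivity (2 * (L + P) * polyRC A ^+ 2 - 4 * Q * (polyRC A * polyRC B)
              + 2 * (L - P) * polyRC B ^+ 2).
  rewrite /L /P /Q; ring.
have I2 : I * I = -1 by rewrite -polyCM mulcii polyCN.
rewrite -(sum_conj_pair_sqr _ _ L P Q I2) /I /L /P /Q !polyRCC; ring.
Qed.

Lemma hcomp_sum : polyRC (\sum_(j < n) wc j *: hc j ^+ 2) = hpoly n k xi g lam.
Proof.
rewrite (sum_ord_pairs (fun j => wc j *: hc j ^+ 2) n_eq) /hpoly.
rewrite (sum_ord_pairs (fun j => (polyRC g).[xi j] *: u j ^+ 2) n_eq) rmorphD rmorph_sum.
rewrite rmorph_sum -addrA mulr_sumr -big_split /=; congr (_ + _).
  apply: eq_bigr => j _.
  by rewrite polyRCZ rmorphXn /= hcomp_real_lagr // wcoef_real_g.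
by apply: eq_bigr => h _; rewrite pair_sum.
Qed.

Lemma horner_hpoly_node j : (j < n)%N -> (hpoly n k xi g lam).[xi j] = (polyRC g).[xi j].
Proof.
move=> ltjn; rewrite /hpoly hornerD hornerM !horner_sum (bigD1 (Ordinal ltjn)) //=.
rewrite hornerZ horner_exp lagr_basis_node // eqxx expr1n mulr1 big1 ?addr0 => [|i neij].
  rewrite big1 ?mulr0 ?addr0 // => i _.
  have ltin := pair_index_lt (ltn_ord i).
  rewrite hornerZ hornerM !lagr_basis_node ?(ltnW ltin) //.
  by case: eqP => [<-|_]; rewrite ?mul0r ?mulr0 // gtn_eqF ?mulr0.
rewrite hornerZ horner_exp lagr_basis_node //.
by have /negbTE -> : (i : nat) != j := neij; rewrite expr0n mulr0.
Qed.

Lemma size_hcomp j : (j < n)%N -> (size (hc j) <= n)%N.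
Proof.
have sizeRe i : (i < n)%N -> (size (polyRe (u i)) <= n)%N.
  by move=> ltin; rewrite (leq_trans (size_polyRe _)) ?size_lagr_basis.
have sizeIm i : (i < n)%N -> (size (polyIm (u i)) <= n)%N.
  by move=> ltin; rewrite (leq_trans (size_polyIm _)) ?size_lagr_basis.
move=> ltjn; case: (index_cases ltjn) => [ltjk|[h lthm ->]|[h lthm ->]].
- by rewrite hcomp_real // sizeRe.
- rewrite hcomp_pair_fst (leq_trans (size_polyD _ _)) // size_polyN geq_max.
  by rewrite sizeRe ?(leq_trans (size_scale_leq _ _)) ?sizeIm ?pair_index_lt.
- by rewrite hcomp_pair_snd (leq_trans (size_scale_leq _ _)) ?sizeIm ?pair_index_lt.
Qed.

Lemma horner_polyRe_pair h l : (h < m)%N -> (l < n)%N ->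
  (polyRC (polyRe (v h))).[xi l]
  = 2^-1 * (((k + 2 * h).+1 == l)%:R + ((k + 2 * h)%N == l)%:R).
Proof.
move=> lthm ltln; have ltin := pair_index_lt lthm.
by rewrite horner_polyRC_polyRe -lagr_basis_pair // !lagr_basis_node // ltnW.
Qed.

Lemma horner_polyIm_pair h l : (h < m)%N -> (l < n)%N ->
  (polyRC (polyIm (v h))).[xi l]
  = 2^-1 * 'i%C * (((k + 2 * h)%N == l)%:R - ((k + 2 * h).+1 == l)%:R).
Proof.
move=> lthm ltln; have ltin := pair_index_lt lthm.
by rewrite horner_polyRC_polyIm -lagr_basis_pair // !lagr_basis_node // ltnW.
Qed.

Lemma horner_comb (c : nat -> R) l : (l < n)%N ->
  (polyRC (\sum_(j < n) c j *: hc j)).[xi l]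
  = \sum_(j < k) real_complex R (c j) * ((j : nat) == l)%:R
    + \sum_(h < m) (real_complex R (c (k + 2 * h)%N)
                      * ((polyRC (polyRe (v h))).[xi l]
                         - real_complex R (tcoef h) * (polyRC (polyIm (v h))).[xi l])
                    + real_complex R (c (k + 2 * h).+1)
                      * (real_complex R (scoef h) * (polyRC (polyIm (v h))).[xi l])).
Proof.
move=> ltln.
rewrite (sum_ord_pairs (fun j => c j *: hc j) n_eq) rmorphD !rmorph_sum hornerD !horner_sum /=.
congr (_ + _); apply: eq_bigr => j _.
  by rewrite polyRCZ hornerZ hcomp_real_lagr // lagr_basis_node // (leq_trans _ le_kn).
rewrite rmorphD hornerD /= !polyRCZ !hornerZ hcomp_pair_fst hcomp_pair_snd rmorphB /=.
by rewrite polyRCZ hornerD hornerN hornerZ polyRCZ hornerZ.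
Qed.

Lemma horner_comb_real (c : nat -> R) l : (l < k)%N ->
  (polyRC (\sum_(j < n) c j *: hc j)).[xi l] = real_complex R (c l).
Proof.
move=> ltlk; have ltln := leq_trans ltlk le_kn.
rewrite horner_comb // (bigD1 (Ordinal ltlk)) //= eqxx mulr1 !big1 ?addr0 //.
- move=> h _; rewrite horner_polyRe_pair ?horner_polyIm_pair //.
  have ltl : (l < k + 2 * h)%N by rewrite ltn_addr.
  rewrite !(@gtn_eqF l) ?ltnS ?(ltnW ltl) //=.
  by rewrite !(mulr0n, addr0, subrr, mulr0).
- by move=> j nejl; have /negbTE -> : (j : nat) != l := nejl; rewrite mulr0.
Qed.

Lemma horner_comb_pair (c : nat -> R) h : (h < m)%N ->
  (polyRC (\sum_(j < n) c j *: hc j)).[xi (k + 2 * h).+1]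
  = (c (k + 2 * h)%N / 2
     +i* ((c (k + 2 * h)%N * tcoef h - c (k + 2 * h).+1 * scoef h) / 2))%C.
Proof.
move=> lthm; have ltin := pair_index_lt lthm.
rewrite horner_comb // big1 ?add0r => [|j _]; last first.
  by rewrite ltn_eqF ?mulr0 // ltnS (leq_trans (ltnW (ltn_ord j))) ?leq_addr.
rewrite (bigD1 (Ordinal lthm)) //= big1 ?addr0.
- rewrite horner_polyRe_pair ?horner_polyIm_pair // eqxx ltn_eqF //=.
  by move: (tcoef h) (scoef h) => t s; simpc; congr (Complex _ _); field.
- move=> h' neh'; have neh : (h' : nat) != h := neh'.
  rewrite horner_polyRe_pair ?horner_polyIm_pair //.
  have -> : ((k + 2 * h')%N == (k + 2 * h).+1) = false by apply/negbTE/eqP; lia.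
  have -> : ((k + 2 * h').+1 == (k + 2 * h).+1) = false.
    by apply/negbTE; apply: contra neh => /eqP ?; apply/eqP; lia.
  by rewrite /= !(mulr0n, addr0, subrr, mulr0).
Qed.

Lemma hcomp_free (c : nat -> R) :
  \sum_(j < n) c j *: hc j = 0 -> forall j, (j < n)%N -> c j = 0.
Proof.
move=> c0 j ltjn.
have comb0 l : (polyRC (\sum_(j < n) c j *: hc j)).[xi l] = 0.
  by rewrite c0 rmorph0 horner0.
have pair0 h : (h < m)%N -> c (k + 2 * h)%N = 0 /\ c (k + 2 * h).+1 = 0.
  move=> lthm; have s_gt0 : 0 < scoef h := divr_gt0 (disc_gt0 lthm) (lam_Re_gt0 lthm).
  move: (comb0 (k + 2 * h).+1); rewrite horner_comb_pair // => /eqP.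
  rewrite eq_complex /= => /andP[/eqP ce0 /eqP co0].
  by move: s_gt0 ce0 co0; move: (c _) (c _) (tcoef h) (scoef h) => x y t s; split; nra.
case: (index_cases ltjn) => [ltjk|[h lthm ->]|[h lthm ->]].
- by apply: (@complexI R); rewrite -horner_comb_real // comb0.
- by case: (pair0 h lthm).
- by case: (pair0 h lthm).
Qed.

Hypothesis size_f : size f = n.+1.
Hypothesis f_factor :
  polyRC f = real_complex R (lead_coef f) *: \prod_(j < n) ('X - (xi j)%:P).

Lemma dvdp_of_roots (p : {poly R}) :
  (forall j, (j < n)%N -> (polyRC p).[xi j] = 0) -> f %| p.
Proof.
move=> p_xi; rewrite -(dvdp_map (real_complex R)) -[map_poly _ f]/(polyRC f).
rewrite f_factor dvdpZl ?(prod_nodes_dvdp xi_inj) //.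
by rewrite (inj_eq (@complexI R)) lead_coef_eq0 -size_poly_eq0 size_f.
Qed.

Lemma hcomp_sum_mod : (\sum_(j < n) wc j *: hc j ^+ 2) %% f = g %% f.
Proof.
apply/eqP; rewrite -subr_eq0 -modpN -modpD; apply/eqP/modp_eq0P/dvdp_of_roots => j ltjn.
by rewrite rmorphB hornerD hornerN /= hcomp_sum horner_hpoly_node // subrr.
Qed.

End SumOfSquares.

Theorem mainTheorem2 (R : realType) (n k : nat) (f g : {poly R})
  (xi : nat -> R[i]) (lam : nat -> R)
  (hkn : (k <= n)%N)
  (hnk_even : ~~ odd (n - k))
  (hdeg : size f = n.+1)
  (hfact : polyRC f = real_complex R (lead_coef f) *: \prod_(j < n) ('X - (xi j)%:P))
  (hdistinct : forall i j : nat, (i < n)%N -> (j < n)%N -> xi i = xi j -> i = j)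
  (hreal : forall i : nat, (i < k)%N -> complex.Im (xi i) = 0)
  (hnonreal : forall i : nat, (k <= i < n)%N -> complex.Im (xi i) != 0)
  (hpair : forall i : nat, (i < (n - k)./2)%N ->
             xi (k + 2 * i)%N = conjc (xi (k + 2 * i).+1))
  (hgpos : forall i : nat, (i < k)%N -> 0 < (polyRC g).[xi i])
  (hlam : forall i : nat, (i < (n - k)./2)%N -> cabs (gam k xi g i) < lam i) :
  (exists hR : {poly R},
      polyRC hR = hpoly n k xi g lam
   /\ hR %% f = g %% f
   /\ hR = \sum_(j < n) wcoef n k xi g lam j *: (hcomp n k xi g lam j) ^+ 2)
  /\ (forall j : nat, (j < k)%N ->
        polyRC (hcomp n k xi g lam j) = lagr_basis n xi j
        /\ real_complex R (wcoef n k xi g lam j) = (polyRC g).[xi j])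
  /\ (forall j : nat, (j < n)%N -> 0 < wcoef n k xi g lam j)
  /\ (forall c : 'I_n -> R,
        \sum_(j < n) c j *: hcomp n k xi g lam j = 0 -> forall j : 'I_n, c j = 0)
  /\ (forall j : nat, (j < n)%N -> (size (hcomp n k xi g lam j) <= n)%N).
Proof.
split.
  exists (\sum_(j < n) wcoef n k xi g lam j *: hcomp n k xi g lam j ^+ 2).
  by split; [exact: hcomp_sum | split; first exact: hcomp_sum_mod].
split; first by move=> j ltjk; split; [exact: hcomp_real_lagr | exact: wcoef_real_g].
split; first exact: wcoef_gt0.
split; last exact: size_hcomp.
move=> c c0 j.
suff /(_ _ (ltn_ord j)) : forall i, (i < n)%N -> c (insubd j i) = 0 by rewrite valKd.
apply: (hcomp_free (k := k) (xi := xi) (g := g) (lam := lam)) => //.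
by rewrite -[RHS]c0; apply: eq_bigr => i _; rewrite valKd.
Qed.
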